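(* Let $\mathbb{S}=[0,1]$ with $0$ and $1$ identified, and let $H:\mathbb{S}\times\mathbb{R}\times\mathbb{R}\to\mathbb{R}$ be $C^\infty$ with $\frac{\partial^2H}{\partial p^2}>0$, $p\mapsto H(x,p,u)$ superlinear for each $(x,u)$, and $|\frac{\partial H}{\partial u}|\le\kappa$ for some $\kappa>0$. Let $u_0$ be a viscosity solution of $H(x,u'(x),u(x))=0$ on $\mathbb{S}$ such that $\frac{\partial H}{\partial p}(x,u_0'(x),u_0(x))\ne0$ at every differentiability point $x$ of $u_0$. Set $B(x)=\frac{\partial H}{\partial p}(x,u_0'(x),u_0(x))$, $$\mu=\frac{\int_0^1\frac{\partial H}{\partial u}(\tau,u_0'(\tau),u_0(\tau))B(\tau)^{-1}d\tau}{\int_0^1B(\tau)^{-1}d\tau},\qquad \rho(x)=\exp\left\{\int_0^x\frac{\mu-\frac{\partial H}{\partial u}(\tau,u_0'(\tau),u_0(\tau))}{B(\tau)}\,d\tau\right\}.$$ Assume $\mu>0$. For given $\Theta\in(\mu,+\infty)$ set $w_\epsilon(x,t)=u_0(x)-\epsilon\rho(x)e^{-\Theta t}$. Then there exists $\tilde\epsilon_0=\tilde\epsilon_0(\Theta)>0$ such that: (1) for $\epsilon\in(0,\tilde\epsilon_0]$, $\partial_tw_\epsilon(x,t)+H(x,\partial_xw_\epsilon(x,t),w_\epsilon(x,t))\ge0$ for all $(x,t)\in\mathbb{S}\times[0,+\infty)$; (2) for $\epsilon\in[-\tilde\epsilon_0,0)$, $\partial_tw_\epsilon(x,t)+H(x,\partial_xw_\epsilon(x,t),w_\epsilon(x,t))\le0$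 for all $(x,t)\in\mathbb{S}\times[0,+\infty)$.
   Context: It is known that under these assumptions $u_0$ is of class $C^\infty$, so $B$ is smooth and nowhere zero, $\rho$ is a smooth positive function on $\mathbb{S}$, and $w_\epsilon$ is $C^\infty$. *)

From Stdlib Require Import Reals List.
From Coquelicot Require Import Coquelicot.
Open Scope R_scope.

(* The circle S = [0,1] with 0 ~ 1 is represented by 1-periodic lifts to R. *)
Definition periodic1 (f : R -> R) : Prop := forall x, f (x + 1) = f x.

Definition Dx (f : R -> R -> R -> R) : R -> R -> R -> R :=
  fun x p u => Derive (fun y => f y p u) x.
Definition Dp (f : R -> R -> R -> R) : R -> R -> R -> R :=
  fun x p u => Derive (fun y => f x y u) p.
Definition Du (f : R -> R -> R -> R) : R -> R -> R -> R :=
  fun x p u => Derive (fun y => f x p y) u.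

Definition Dir (i : nat) : (R -> R -> R -> R) -> (R -> R -> R -> R) :=
  match i with O => Dx | 1%nat => Dp | _ => Du end.

Fixpoint pder (l : list nat) (f : R -> R -> R -> R) : R -> R -> R -> R :=
  match l with nil => f | i :: l' => Dir i (pder l' f) end.

Definition smooth3 (f : R -> R -> R -> R) : Prop :=
  forall l : list nat,
    (forall x p u,
        ex_derive (fun y => pder l f y p u) x /\
        ex_derive (fun y => pder l f x y u) p /\
        ex_derive (fun y => pder l f x p y) u) /\
    (forall x p u,
        continuous (fun z : R * R * R => pder l f (fst (fst z)) (snd (fst z)) (snd z))
                   (x, p, u)).

Definition smooth1 (f : R -> R) : Prop :=
  forall (n : nat) (x : R), ex_derive (Derive_n f n) x.

Definition C1 (phi : R -> R) : Prop :=
  (forall x, ex_derive phi x) /\ (forall x, continuous (Derive phi) x).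

Definition loc_max (g : R -> R) (x : R) : Prop :=
  exists d, 0 < d /\ forall y, Rabs (y - x) < d -> g y <= g x.
Definition loc_min (g : R -> R) (x : R) : Prop :=
  exists d, 0 < d /\ forall y, Rabs (y - x) < d -> g x <= g y.

Definition viscosity_solution (H : R -> R -> R -> R) (u : R -> R) : Prop :=
  periodic1 u /\ (forall x, continuous u x) /\
  (forall phi x, C1 phi -> loc_max (fun y => u y - phi y) x ->
       H x (Derive phi x) (u x) <= 0) /\
  (forall phi x, C1 phi -> loc_min (fun y => u y - phi y) x ->
       H x (Derive phi x) (u x) >= 0).

Definition superlinear_p (H : R -> R -> R -> R) : Prop :=
  forall x u M : R, exists R0 : R, forall p : R,
    R0 <= Rabs p -> M * Rabs p <= H x p u.

Definition Bfun (H : R -> R -> R -> R) (u0 : R -> R) (x : R) : R :=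
  Dp H x (Derive u0 x) (u0 x).
Definition Hufun (H : R -> R -> R -> R) (u0 : R -> R) (x : R) : R :=
  Du H x (Derive u0 x) (u0 x).

Definition mu (H : R -> R -> R -> R) (u0 : R -> R) : R :=
  RInt (fun t => Hufun H u0 t / Bfun H u0 t) 0 1 /
  RInt (fun t => / Bfun H u0 t) 0 1.

Definition rho (H : R -> R -> R -> R) (u0 : R -> R) (x : R) : R :=
  exp (RInt (fun t => (mu H u0 - Hufun H u0 t) / Bfun H u0 t) 0 x).

Definition w (H : R -> R -> R -> R) (u0 : R -> R) (Theta eps : R) (x t : R) : R :=
  u0 x - eps * rho H u0 x * exp (- Theta * t).

Definition HJop (H : R -> R -> R -> R) (W : R -> R -> R) (x t : R) : R :=
  Derive (fun s => W x s) t + H x (Derive (fun y => W y t) x) (W x t).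

From Pilot Require Import Defs.
From Stdlib Require Import Reals Lra ZArith Classical.
From Coquelicot Require Import Coquelicot.
Open Scope R_scope.

(* Put delta = eps exp(-Theta t) and g = rho'/rho = (mu - H_u)/B.  By the mean
   value theorem and H(x, u0', u0) = 0,
     d_t w + H(x, d_x w, w) = delta rho (Theta - H_u(x, p, eta) - g H_p(x, xi, u0))
   with (p, xi, eta) within O(delta) of (u0', u0', u0).  At delta = 0 the bracket
   is Theta - H_u - g B = Theta - mu > 0, and the choice of mu is exactly what
   makes int_0^1 g = 0, i.e. rho periodic.  On the compact circle the bracket
   therefore stays nonnegative for |eps| small, uniformly in (x, t), and the
   sign of the left-hand side is the sign of eps. *)

Definition uncurry3 (F : R -> R -> R -> R) (z : R * R * R) : R :=
  F (fst (fst z)) (snd (fst z)) (snd z).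

Lemma ex_RInt_continuous_R (f : R -> R) (a b : R) :
  (forall x, continuous f x) -> ex_RInt f a b.
Proof. intro Hf. apply (@ex_RInt_continuous R_CompleteNormedModule). auto. Qed.

Lemma ex_derive_continuous_R (f : R -> R) (x : R) : ex_derive f x -> continuous f x.
Proof. exact (@ex_derive_continuous R_AbsRing R_NormedModule f x). Qed.

Lemma periodic1_shift_IZR (f : R -> R) :
  periodic1 f -> forall (k : Z) (x : R), f (x + IZR k) = f x.
Proof.
  intros Hf k. induction k as [| k IHk | k IHk] using Z.peano_ind; intro x.
  - now rewrite Rplus_0_r.
  - rewrite succ_IZR, <- Rplus_assoc, Hf. apply IHk.
  - rewrite <- (IHk x), <- (Hf (x + IZR (Z.pred k))), Rplus_assoc, <- succ_IZR,
      Z.succ_pred.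
    reflexivity.
Qed.

Lemma periodic1_frac_part (f : R -> R) :
  periodic1 f -> forall x, f x = f (frac_part x).
Proof.
  intros Hf x. rewrite (Rplus_Int_part_frac_part x) at 1. rewrite Rplus_comm.
  now apply periodic1_shift_IZR.
Qed.

Lemma periodic1_Derive (f : R -> R) : periodic1 f -> periodic1 (Derive f).
Proof.
  intros Hf x. pose proof (Derive_n_comp_trans f 1 x 1) as E. simpl in E.
  change (Derive (fun y => f y) (x + 1) = Derive f x).
  rewrite <- E. apply Derive_ext. intro y. apply Hf.
Qed.

Lemma periodic1_bounded (f : R -> R) :
  periodic1 f -> (forall x, continuous f x) -> exists M, forall x, Rabs (f x) <= M.
Proof.
  intros Hf Hc.
  destruct (continuity_ab_maj (fun x => Rabs (f x)) 0 1) as [m [Hm _]].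
  - lra.
  - intros c _. apply continuity_pt_filterlim, continuous_Rabs_comp, Hc.
  - exists (Rabs (f m)). intro x. rewrite (periodic1_frac_part f Hf x).
    apply Hm. pose proof (base_fp x). lra.
Qed.

Lemma RInt_shift1 (g : R -> R) (a b : R) :
  periodic1 g -> ex_RInt g (a + 1) (b + 1) -> RInt g (a + 1) (b + 1) = RInt g a b.
Proof.
  intros Hg Hex.
  rewrite <- (Rmult_1_l a), <- (Rmult_1_l b) in Hex |- *.
  rewrite <- (RInt_comp_lin g 1 1 a b Hex), !Rmult_1_l.
  apply RInt_ext. intros y _. change (1 * g (1 * y + 1) = g y).
  now rewrite !Rmult_1_l, Hg.
Qed.

Lemma periodic1_RInt0 (g : R -> R) :
  periodic1 g -> (forall x, continuous g x) -> RInt g 0 1 = 0 ->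
  periodic1 (fun x => RInt g 0 x).
Proof.
  intros Hg Hc H01 x.
  assert (Hex : forall a b, ex_RInt g a b)
    by (intros a b; now apply ex_RInt_continuous_R).
  rewrite <- (@RInt_Chasles R_CompleteNormedModule g 0 1 (x + 1)) by auto.
  rewrite H01, plus_zero_l, <- (Rplus_0_l 1) at 1.
  now rewrite RInt_shift1.
Qed.

Lemma is_derive_exp_RInt0 (g : R -> R) (x : R) :
  (forall y, continuous g y) ->
  is_derive (fun y => exp (RInt g 0 y)) x (exp (RInt g 0 x) * g x).
Proof.
  intro Hc. rewrite Rmult_comm.
  apply (is_derive_comp exp (fun y => RInt g 0 y)); [apply is_derive_exp |].
  apply (is_derive_RInt g (RInt g 0) 0 x); [| apply Hc].
  apply filter_forall. intro y.
  apply (@RInt_correct R_CompleteNormedModule), ex_RInt_continuous_R, Hc.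
Qed.

Lemma continuous_pair {T U V : UniformSpace} (f : T -> U) (g : T -> V) (x : T) :
  continuous f x -> continuous g x -> continuous (fun y => (f y, g y)) x.
Proof.
  intros Hf Hg. apply (continuous_comp_2 f g (fun a b => (a, b))); [exact Hf | exact Hg |].
  apply (continuous_ext (fun z => z)); [now intros [a b] | apply continuous_id].
Qed.

Lemma continuous_along_curve (F : R -> R -> R -> R) (P U : R -> R) (x : R) :
  continuous (uncurry3 F) (x, P x, U x) -> continuous P x -> continuous U x ->
  continuous (fun y => F y (P y) (U y)) x.
Proof.
  intros HF HP HU.
  apply (continuous_comp (fun y => (y, P y, U y)) (uncurry3 F)); [| exact HF].
  apply continuous_pair; [apply continuous_pair; [apply continuous_id |] |]; assumption.
Qed.

Lemma periodic1_along_curve (F : R -> R -> R -> R) (P U : R -> R) :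
  (forall p u, periodic1 (fun x => F x p u)) -> periodic1 P -> periodic1 U ->
  periodic1 (fun x => F x (P x) (U x)).
Proof. intros HF HP HU x. simpl. rewrite HP, HU. apply HF. Qed.

Lemma periodic1_Dp (F : R -> R -> R -> R) :
  (forall p u, periodic1 (fun x => F x p u)) -> forall p u, periodic1 (fun x => Dp F x p u).
Proof. intros HF p u x. apply Derive_ext. intro q. apply HF. Qed.

Lemma periodic1_Du (F : R -> R -> R -> R) :
  (forall p u, periodic1 (fun x => F x p u)) -> forall p u, periodic1 (fun x => Du F x p u).
Proof. intros HF p u x. apply Derive_ext. intro v. apply HF. Qed.

Lemma continuous3_near_curve_radius (F : R -> R -> R -> R) (P U : R -> R) (t c : R) :
  continuous (uncurry3 F) (t, P t, U t) -> continuous P t -> continuous U t -> 0 < c ->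
  {r : posreal | forall y p u, Rabs (y - t) < r -> Rabs (p - P y) < r -> Rabs (u - U y) < r ->
     Rabs (F y p u - F t (P t) (U t)) < c}.
Proof.
  intros HF HP HU Hc.
  assert (HlocF : locally (t, P t, U t)
                    (fun z => Rabs (uncurry3 F z - F t (P t) (U t)) < c)).
  { eapply filter_imp; [| exact (proj1 (filterlim_locally _ _) HF (mkposreal c Hc))].
    now intros z Hz. }
  destruct (locally_ex_dec _ _ (fun z => classic _) HlocF) as [r0 Hr0].
  assert (Hr0' : 0 < r0 / 2) by (pose proof (cond_pos r0); lra).
  assert (HlocPU : locally t
                     (fun y => Rabs (P y - P t) < r0 / 2 /\ Rabs (U y - U t) < r0 / 2)).
  { apply filter_and.
    - eapply filter_imp; [| exact (proj1 (filterlim_locally _ _) HP (mkposreal _ Hr0'))].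
      now intros y Hy.
    - eapply filter_imp; [| exact (proj1 (filterlim_locally _ _) HU (mkposreal _ Hr0'))].
      now intros y Hy. }
  destruct (locally_ex_dec _ _ (fun y => classic _) HlocPU) as [s Hs].
  exists (mkposreal _ (Rmin_pos _ _ Hr0' (cond_pos s))). simpl.
  intros y p u Hy Hp Hu.
  pose proof (Rmin_l (r0 / 2) s). pose proof (Rmin_r (r0 / 2) s).
  destruct (Hs y) as [HPy HUy]; [change (Rabs (y - t) < s); lra |].
  apply (Hr0 (y, p, u)). split; [split |]; simpl.
  - change (Rabs (y - t) < r0). lra.
  - change (Rabs (p - P t) < r0).
    pose proof (Rabs_triang (p - P y) (P y - P t)). replace (p - P t) with
      ((p - P y) + (P y - P t)) by ring. lra.
  - change (Rabs (u - U t) < r0).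
    pose proof (Rabs_triang (u - U y) (U y - U t)). replace (u - U t) with
      ((u - U y) + (U y - U t)) by ring. lra.
Qed.

Lemma continuous3_uniform_near_curve (F : R -> R -> R -> R) (P U : R -> R) (a b : R) :
  (forall x, continuous (uncurry3 F) (x, P x, U x)) ->
  (forall x, continuous P x) -> (forall x, continuous U x) ->
  forall c, 0 < c -> exists d, 0 < d /\ forall x, a <= x <= b -> forall p u,
    Rabs (p - P x) < d -> Rabs (u - U x) < d -> Rabs (F x p u - F x (P x) (U x)) < c.
Proof.
  intros HF HP HU c Hc.
  assert (Hc2 : 0 < c / 2) by lra.
  pose (radius t := continuous3_near_curve_radius F P U t (c / 2) (HF t) (HP t) (HU t) Hc2).
  destruct (compactness_value_1d a b (fun t => proj1_sig (radius t))) as [d Hd].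
  exists d. split; [apply cond_pos |]. intros x Hx p u Hp Hu.
  apply NNPP. intro Hn. apply (Hd x Hx). intros [t [_ [Hxt Hdt]]]. apply Hn.
  destruct (radius t) as [r Hr]. simpl in Hxt, Hdt.
  assert (Hzero : forall f : R -> R, Rabs (f x - f x) < r)
    by (intro f; rewrite Rminus_diag, Rabs_R0; apply cond_pos).
  pose proof (Hr x p u Hxt ltac:(lra) ltac:(lra)) as Hpu.
  pose proof (Hr x (P x) (U x) Hxt (Hzero P) (Hzero U)) as Hcurve.
  rewrite Rabs_minus_sym in Hcurve.
  pose proof (Rabs_triang (F x p u - F t (P t) (U t)) (F t (P t) (U t) - F x (P x) (U x))).
  replace (F x p u - F x (P x) (U x)) with
    ((F x p u - F t (P t) (U t)) + (F t (P t) (U t) - F x (P x) (U x))) by ring.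
  lra.
Qed.

Lemma continuous3_uniform_near_periodic_curve (F : R -> R -> R -> R) (P U : R -> R) :
  (forall p u, periodic1 (fun x => F x p u)) -> periodic1 P -> periodic1 U ->
  (forall x, continuous (uncurry3 F) (x, P x, U x)) ->
  (forall x, continuous P x) -> (forall x, continuous U x) ->
  forall c, 0 < c -> exists d, 0 < d /\ forall x p u,
    Rabs (p - P x) < d -> Rabs (u - U x) < d -> Rabs (F x p u - F x (P x) (U x)) < c.
Proof.
  intros HFp HPp HUp HF HP HU c Hc.
  destruct (continuous3_uniform_near_curve F P U 0 1 HF HP HU c Hc) as [d [Hd Hunif]].
  exists d. split; [exact Hd |]. intros x p u.
  assert (HFx : forall p u, F x p u = F (frac_part x) p u)
    by (intros p' u'; exact (periodic1_frac_part _ (HFp p' u') x)).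
  rewrite (periodic1_frac_part P HPp x), (periodic1_frac_part U HUp x), !HFx.
  apply Hunif. pose proof (base_fp x). lra.
Qed.

Lemma MVT_Rabs (f : R -> R) (a b : R) :
  (forall y, ex_derive f y) ->
  exists c, Rabs (c - a) <= Rabs (b - a) /\ f b - f a = Derive f c * (b - a).
Proof.
  intro Hd. destruct (MVT_gen f a b (Derive f)) as [c [Hc E]].
  - intros y _. now apply Derive_correct.
  - intros y _. apply continuity_pt_filterlim, ex_derive_continuous_R, Hd.
  - exists c. split; [| exact E].
    revert Hc. unfold Rmin, Rmax. destruct (Rle_dec a b); intros [H1 H2];
      unfold Rabs; repeat destruct Rcase_abs; lra.
Qed.

Lemma mean_value_increment_pu (F : R -> R -> R -> R) (x p0 u0 p u : R) :
  (forall p u, ex_derive (fun q => F x q u) p) ->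
  (forall p u, ex_derive (fun v => F x p v) u) ->
  exists xi eta, Rabs (xi - p0) <= Rabs (p - p0) /\ Rabs (eta - u0) <= Rabs (u - u0) /\
    F x p u - F x p0 u0 = Dp F x xi u0 * (p - p0) + Du F x p eta * (u - u0).
Proof.
  intros HDp HDu.
  destruct (MVT_Rabs (fun q => F x q u0) p0 p (fun q => HDp q u0)) as [xi [Hxi Exi]].
  destruct (MVT_Rabs (fun v => F x p v) u0 u (HDu p)) as [eta [Heta Eeta]].
  exists xi, eta. split; [exact Hxi | split; [exact Heta |]].
  unfold Dp, Du. lra.
Qed.

Lemma smooth1_C1 (f : R -> R) : smooth1 f -> Defs.C1 f.
Proof.
  intro Hf. split; intro x; [exact (Hf 0%nat x) |].
  apply ex_derive_continuous_R. exact (Hf 1%nat x).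
Qed.

(* A C^1 function is its own test function, from above and from below. *)
Lemma viscosity_solution_C1_eq (H : R -> R -> R -> R) (u : R -> R) :
  viscosity_solution H u -> Defs.C1 u -> forall x, H x (Derive u x) (u x) = 0.
Proof.
  intros [_ [_ [Hsub Hsup]]] Hu x.
  assert (Hmax : loc_max (fun y => u y - u y) x) by (exists 1; split; intros; lra).
  assert (Hmin : loc_min (fun y => u y - u y) x) by (exists 1; split; intros; lra).
  pose proof (Hsub u x Hu Hmax). pose proof (Hsup u x Hu Hmin). lra.
Qed.

Definition rho_logderiv (H : R -> R -> R -> R) (u0 : R -> R) (t : R) : R :=
  (mu H u0 - Hufun H u0 t) / Bfun H u0 t.

Lemma rho_pos (H : R -> R -> R -> R) (u0 : R -> R) (x : R) : 0 < rho H u0 x.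
Proof. apply exp_pos. Qed.

Section Perturbation.

Variables (H : R -> R -> R -> R) (u0 : R -> R).

Hypothesis H_ex_Dp : forall x p u, ex_derive (fun q => H x q u) p.
Hypothesis H_ex_Du : forall x p u, ex_derive (fun v => H x p v) u.
Hypothesis Dp_continuous : forall x p u, continuous (uncurry3 (Dp H)) (x, p, u).
Hypothesis Du_continuous : forall x p u, continuous (uncurry3 (Du H)) (x, p, u).
Hypothesis H_periodic : forall p u, periodic1 (fun x => H x p u).
Hypothesis u0_periodic : periodic1 u0.
Hypothesis u0_C1 : Defs.C1 u0.
Hypothesis u0_solution : forall x, H x (Derive u0 x) (u0 x) = 0.
Hypothesis B_neq0 : forall x, Bfun H u0 x <> 0.
Hypothesis mu_pos : 0 < mu H u0.

Let u0_continuous x : continuous u0 x.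
Proof. apply ex_derive_continuous_R, u0_C1. Qed.

Let Du0_continuous x : continuous (Derive u0) x.
Proof. apply u0_C1. Qed.

Let Du0_periodic : periodic1 (Derive u0).
Proof. exact (periodic1_Derive u0 u0_periodic). Qed.

Lemma continuous_Bfun x : continuous (Bfun H u0) x.
Proof. now apply continuous_along_curve. Qed.

Lemma continuous_Hufun x : continuous (Hufun H u0) x.
Proof. now apply continuous_along_curve. Qed.

Lemma continuous_rho_logderiv x : continuous (rho_logderiv H u0) x.
Proof.
  unfold rho_logderiv, Rdiv.
  apply (continuous_mult (fun t => mu H u0 - Hufun H u0 t) (fun t => / Bfun H u0 t)).
  - apply (continuous_minus (fun _ => mu H u0)); [apply continuous_const | apply continuous_Hufun].
  - apply continuous_Rinv_comp; [apply continuous_Bfun | apply B_neq0].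
Qed.

Lemma periodic1_rho_logderiv : periodic1 (rho_logderiv H u0).
Proof.
  intro x. unfold rho_logderiv, Bfun, Hufun.
  rewrite (periodic1_along_curve (Dp H) _ _ (periodic1_Dp H H_periodic) Du0_periodic u0_periodic),
    (periodic1_along_curve (Du H) _ _ (periodic1_Du H H_periodic) Du0_periodic u0_periodic).
  reflexivity.
Qed.

(* Were this integral 0, Rocq's junk value x / 0 = 0 would force mu = 0. *)
Lemma RInt_invB_neq0 : RInt (fun t => / Bfun H u0 t) 0 1 <> 0.
Proof.
  intro H0. pose proof mu_pos as Hmu. unfold mu in Hmu.
  rewrite H0, Rdiv_0_r in Hmu. lra.
Qed.

Lemma RInt_rho_logderiv : RInt (rho_logderiv H u0) 0 1 = 0.
Proof.
  assert (HinvB : ex_RInt (fun t => / Bfun H u0 t) 0 1).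
  { apply ex_RInt_continuous_R. intro x.
    apply continuous_Rinv_comp; [apply continuous_Bfun | apply B_neq0]. }
  assert (HHuB : ex_RInt (fun t => Hufun H u0 t / Bfun H u0 t) 0 1).
  { apply ex_RInt_continuous_R. intro x.
    apply (continuous_mult (Hufun H u0) (fun t => / Bfun H u0 t));
      [apply continuous_Hufun | apply continuous_Rinv_comp;
                                [apply continuous_Bfun | apply B_neq0]]. }
  rewrite (RInt_ext _ (fun t => minus (scal (mu H u0) (/ Bfun H u0 t))
                                      (Hufun H u0 t / Bfun H u0 t))).
  2: { intros t _. unfold rho_logderiv.
       change ((mu H u0 - Hufun H u0 t) / Bfun H u0 t
               = mu H u0 * / Bfun H u0 t - Hufun H u0 t / Bfun H u0 t).
       field. apply B_neq0. }
  rewrite (@RInt_minus R_CompleteNormedModule), (@RInt_scal R_CompleteNormedModule);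
    [| exact HinvB | apply (@ex_RInt_scal R_CompleteNormedModule), HinvB | exact HHuB].
  change (mu H u0 * RInt (fun t => / Bfun H u0 t) 0 1
          - RInt (fun t => Hufun H u0 t / Bfun H u0 t) 0 1 = 0).
  pose proof RInt_invB_neq0. unfold mu. field. assumption.
Qed.

Lemma mu_decomposition x :
  mu H u0 = Hufun H u0 x + rho_logderiv H u0 x * Bfun H u0 x.
Proof. unfold rho_logderiv. field. apply B_neq0. Qed.

Lemma is_derive_rho x : is_derive (rho H u0) x (rho H u0 x * rho_logderiv H u0 x).
Proof. exact (is_derive_exp_RInt0 _ x continuous_rho_logderiv). Qed.

Lemma periodic1_rho : periodic1 (rho H u0).
Proof.
  intro x. unfold rho. f_equal.
  exact (periodic1_RInt0 _ periodic1_rho_logderiv continuous_rho_logderiv RInt_rho_logderiv x).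
Qed.

Lemma Derive_w_t Theta eps x t :
  Derive (fun s => w H u0 Theta eps x s) t =
  eps * exp (- Theta * t) * rho H u0 x * Theta.
Proof. apply is_derive_unique. unfold w. auto_derive; [exact I | ring]. Qed.

Lemma Derive_w_x Theta eps x t :
  Derive (fun y => w H u0 Theta eps y t) x =
  Derive u0 x - eps * exp (- Theta * t) * (rho H u0 x * rho_logderiv H u0 x).
Proof.
  apply is_derive_unique. unfold w.
  auto_derive; [split; [apply u0_C1 | split; [eexists; apply is_derive_rho | exact I]] |].
  change (Derive (fun y : R => u0 y) x) with (Derive u0 x).
  change (Derive (fun y : R => rho H u0 y) x) with (Derive (rho H u0) x).
  rewrite (is_derive_unique _ _ _ (is_derive_rho x)). ring.
Qed.

Lemma HJop_w_expansion Theta eps x t :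
  let delta := eps * exp (- Theta * t) in
  let r := rho H u0 x in
  let g := rho_logderiv H u0 x in
  exists p xi eta,
    Rabs (p - Derive u0 x) <= Rabs (delta * r * g) /\
    Rabs (xi - Derive u0 x) <= Rabs (delta * r * g) /\
    Rabs (eta - u0 x) <= Rabs (delta * r) /\
    HJop H (w H u0 Theta eps) x t =
      delta * r * (Theta - Du H x p eta - g * Dp H x xi (u0 x)).
Proof.
  intros delta r g.
  set (p := Derive u0 x - delta * (r * g)).
  destruct (mean_value_increment_pu H x (Derive u0 x) (u0 x) p (u0 x - delta * r)
              (H_ex_Dp x) (H_ex_Du x)) as [xi [eta [Hxi [Heta E]]]].
  exists p, xi, eta.
  replace (p - Derive u0 x) with (- (delta * r * g)) in * by (unfold p; ring).
  replace (u0 x - delta * r - u0 x) with (- (delta * r)) in * by ring.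
  rewrite Rabs_Ropp in *.
  split; [apply Rle_refl | split; [exact Hxi | split; [exact Heta |]]].
  unfold HJop. rewrite Derive_w_t, Derive_w_x. fold delta r g p.
  replace (w H u0 Theta eps x t) with (u0 x - delta * r) by (unfold w, delta, r; ring).
  rewrite u0_solution in E. rewrite Rminus_0_r in E. rewrite E. ring.
Qed.

Lemma rate_margin Theta :
  mu H u0 < Theta ->
  exists d, 0 < d /\ forall x p xi eta,
    Rabs (p - Derive u0 x) < d -> Rabs (xi - Derive u0 x) < d -> Rabs (eta - u0 x) < d ->
    0 <= Theta - Du H x p eta - rho_logderiv H u0 x * Dp H x xi (u0 x).
Proof.
  intro HTheta.
  destruct (periodic1_bounded _ periodic1_rho_logderiv continuous_rho_logderiv)
    as [G HG].
  pose proof (Rle_trans _ _ _ (Rabs_pos _) (HG 0)) as HG0.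
  set (c := (Theta - mu H u0) / (G + 1)).
  assert (Hc : 0 < c) by (unfold c; apply Rdiv_lt_0_compat; lra).
  destruct (continuous3_uniform_near_periodic_curve (Dp H) (Derive u0) u0
              (periodic1_Dp H H_periodic) Du0_periodic u0_periodic
              (fun x => Dp_continuous _ _ _) Du0_continuous u0_continuous c Hc)
    as [d1 [Hd1 Hunif1]].
  destruct (continuous3_uniform_near_periodic_curve (Du H) (Derive u0) u0
              (periodic1_Du H H_periodic) Du0_periodic u0_periodic
              (fun x => Du_continuous _ _ _) Du0_continuous u0_continuous c Hc)
    as [d2 [Hd2 Hunif2]].
  exists (Rmin d1 d2). split; [now apply Rmin_pos |].
  intros x p xi eta Hp Hxi Heta.
  pose proof (Rmin_l d1 d2). pose proof (Rmin_r d1 d2).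
  assert (Hzero : Rabs (u0 x - u0 x) < d1) by (rewrite Rminus_diag, Rabs_R0; exact Hd1).
  pose proof (Hunif1 x xi (u0 x) ltac:(lra) Hzero) as E1.
  pose proof (Hunif2 x p eta ltac:(lra) ltac:(lra)) as E2.
  fold (Bfun H u0 x) in E1. fold (Hufun H u0 x) in E2.
  pose proof (HG x) as Hgx. pose proof (mu_decomposition x) as Hmu.
  set (g := rho_logderiv H u0 x) in *.
  assert (Hgap : c * (G + 1) = Theta - mu H u0) by (unfold c; field; lra).
  assert (Hge : Rabs (g * (Dp H x xi (u0 x) - Bfun H u0 x)) <= G * c)
    by (rewrite Rabs_mult; apply Rmult_le_compat; auto using Rabs_pos, Rlt_le).
  pose proof (Rle_abs (Du H x p eta - Hufun H u0 x)).
  pose proof (Rle_abs (g * (Dp H x xi (u0 x) - Bfun H u0 x))).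
  lra.
Qed.

Lemma perturbation_small d :
  0 < d -> exists eps0, 0 < eps0 /\ forall delta x, Rabs delta <= eps0 ->
    Rabs (delta * rho H u0 x * rho_logderiv H u0 x) < d /\ Rabs (delta * rho H u0 x) < d.
Proof.
  intro Hd.
  destruct (periodic1_bounded _ periodic1_rho_logderiv continuous_rho_logderiv)
    as [G HG].
  destruct (periodic1_bounded _ periodic1_rho
              (fun x => ex_derive_continuous_R _ x (ex_intro _ _ (is_derive_rho x))))
    as [A HA].
  pose proof (Rle_trans _ _ _ (Rabs_pos _) (HG 0)).
  pose proof (Rle_trans _ _ _ (Rabs_pos _) (HA 0)).
  set (M := (A + 1) * (G + 1)).
  assert (HM : 0 < M) by (unfold M; nra).
  exists (d / (2 * M)). split; [apply Rdiv_lt_0_compat; lra |].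
  intros delta x Hdelta.
  assert (HdM : Rabs delta * M <= d / 2).
  { apply (Rmult_le_compat_r M) in Hdelta; [| lra].
    replace (d / (2 * M) * M) with (d / 2) in Hdelta by (field; lra). exact Hdelta. }
  pose proof (HG x). pose proof (HA x).
  assert (Hr : Rabs (rho H u0 x) <= M) by (unfold M; nra).
  assert (Hrg : Rabs (rho H u0 x) * Rabs (rho_logderiv H u0 x) <= M).
  { unfold M. apply Rmult_le_compat; auto using Rabs_pos; lra. }
  pose proof (Rmult_le_compat_l _ _ _ (Rabs_pos delta) Hr).
  pose proof (Rmult_le_compat_l _ _ _ (Rabs_pos delta) Hrg).
  rewrite !Rabs_mult, Rmult_assoc. split; lra.
Qed.

Lemma HJop_w_sign Theta :
  mu H u0 < Theta ->
  exists eps0, 0 < eps0 /\ forall eps x t, Rabs eps <= eps0 -> 0 <= t ->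
    exists K, 0 <= K /\ HJop H (w H u0 Theta eps) x t = eps * K.
Proof.
  intro HTheta.
  destruct (rate_margin Theta HTheta) as [d [Hd Hmargin]].
  destruct (perturbation_small d Hd) as [eps0 [Heps0 Hsmall]].
  exists eps0. split; [exact Heps0 |]. intros eps x t Heps Ht.
  assert (Hdecay : 0 < exp (- Theta * t) <= 1).
  { split; [apply exp_pos |]. rewrite <- exp_0.
    destruct (Rle_lt_or_eq_dec (- Theta * t) 0) as [Hlt | ->]; [nra | | apply Rle_refl].
    now apply Rlt_le, exp_increasing. }
  assert (Hdelta : Rabs (eps * exp (- Theta * t)) <= eps0).
  { rewrite Rabs_mult, (Rabs_pos_eq (exp _)) by lra.
    pose proof (Rabs_pos eps). nra. }
  destruct (Hsmall _ x Hdelta) as [Hpg Hp].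
  destruct (HJop_w_expansion Theta eps x t) as [p [xi [eta [Hp' [Hxi [Heta E]]]]]].
  exists (exp (- Theta * t) * rho H u0 x *
          (Theta - Du H x p eta - rho_logderiv H u0 x * Dp H x xi (u0 x))).
  split.
  - pose proof (rho_pos H u0 x).
    apply Rmult_le_pos; [apply Rmult_le_pos; lra |].
    apply Hmargin; lra.
  - rewrite E. ring.
Qed.

End Perturbation.

Theorem lemma2p5 (H : R -> R -> R -> R) (u0 : R -> R) (kappa : R) :
  smooth3 H ->
  (forall x p u, H (x + 1) p u = H x p u) ->
  (forall x p u, Dp (Dp H) x p u > 0) ->
  superlinear_p H ->
  0 < kappa ->
  (forall x p u, Rabs (Du H x p u) <= kappa) ->
  viscosity_solution H u0 ->
  (forall x, ex_derive u0 x -> Dp H x (Derive u0 x) (u0 x) <> 0) ->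
  (* known regularity result quoted in the paper's context *)
  smooth1 u0 ->
  mu H u0 > 0 ->
  forall Theta : R, mu H u0 < Theta ->
  exists eps0 : R, 0 < eps0 /\
    (forall eps, 0 < eps <= eps0 ->
       forall x t, 0 <= t -> HJop H (w H u0 Theta eps) x t >= 0) /\
    (forall eps, - eps0 <= eps < 0 ->
       forall x t, 0 <= t -> HJop H (w H u0 Theta eps) x t <= 0).
Proof.
  intros Hsmooth Hper _ _ _ _ Hvisc HB Hu0 Hmu Theta HTheta.
  assert (Hu0C1 : Defs.C1 u0) by now apply smooth1_C1.
  destruct (HJop_w_sign H u0
              (fun x p u => proj1 (proj2 (proj1 (Hsmooth nil) x p u)))
              (fun x p u => proj2 (proj2 (proj1 (Hsmooth nil) x p u)))
              (proj2 (Hsmooth (cons 1%nat nil)))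
              (proj2 (Hsmooth (cons 2%nat nil)))
              (fun p u x => Hper x p u) (proj1 Hvisc) Hu0C1
              (viscosity_solution_C1_eq H u0 Hvisc Hu0C1)
              (fun x => HB x (proj1 Hu0C1 x)) Hmu Theta HTheta)
    as [eps0 [Heps0 Hsign]].
  exists eps0. split; [exact Heps0 | split].
  - intros eps Heps x t Ht.
    destruct (Hsign eps x t) as [K [HK ->]]; [rewrite Rabs_pos_eq; lra | exact Ht |].
    apply Rle_ge, Rmult_le_pos; lra.
  - intros eps Heps x t Ht.
    destruct (Hsign eps x t) as [K [HK ->]]; [rewrite Rabs_left; lra | exact Ht |].
    apply Rmult_le_0_r; lra.
Qed.
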